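(* Let $K$ be a simplex in a topological vector space $F$ and let $T:K\to 2^{K}$ be a correspondence. Assume that for each neighborhood $V$ of the origin in $F$ there is a weakly naturally quasiconvex correspondence $T^{V}:K\to 2^{K}$ such that $\mathrm{Gr}(T^{V})\subset \mathrm{cl}\,\mathrm{Gr}(T_V)$. Then there exists $x^*\in K$ such that $x^*\in\overline{T}(x^* )$.
   Context: A simplex is the convex hull of a finite affinely independent set. For a correspondence $T:X\to 2^Y$, $\mathrm{Gr}(T)=\{(x,y)\in X\times Y: y\in T(x)\}$; $\overline{T}(x)=\{y\in Y:(x,y)\in \mathrm{cl}_{X\times Y}\mathrm{Gr}(T)\}$; for $V\subset F$, $T_V:X\to 2^Y$ is defined by $T_V(x)=(T(x)+V)\cap Y$. $\Delta_{n-1}=\{(\lambda_1,\dots,\lambda_n)\in\mathbb{R}^n:\sum_i\lambda_i=1,\ \lambda_i\ge 0\}$. Weakly naturally quasiconvex (WNQ): let $X,Y$ be nonempty convex subsets of topological vector spaces. A correspondence $T:X\to 2^{Y}$ is weakly naturally quasiconvex if for each $n\in\mathbb{N}$ and each finite set $\{x_1,\dots,x_n\}\subset X$ there exist $y_i\in T(x_i)$ ($i=1,\dots,n$) and a bijection $g:\Delta_{n-1}\to\Delta_{n-1}$ (depending on $x_1,\dots,x_n$) of the form $g(\lambda_1,\dots,\lambda_n)=(g_1(\lambda_1),\dots,g_n(\lambda_n))$, where each $g_i:[0,1]\to[0,1]$ is continuous with $g_i(0)=0$ and $g_i(1)=1$, such that for every $(\lambda_1,\dots,\lambda_n)\in\Delta_{n-1}$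 we have $\sum_{i=1}^n g_i(\lambda_i)y_i\in T\big(\sum_{i=1}^n\lambda_i x_i\big)$. *)

From Stdlib Require Import Reals.
Open Scope R_scope.

Record TVS := {
  carrier :> Type;
  vzero : carrier;
  vadd : carrier -> carrier -> carrier;
  vopp : carrier -> carrier;
  vscal : R -> carrier -> carrier;
  vadd_assoc : forall x y z, vadd x (vadd y z) = vadd (vadd x y) z;
  vadd_comm : forall x y, vadd x y = vadd y x;
  vadd_0 : forall x, vadd x vzero = x;
  vadd_opp : forall x, vadd x (vopp x) = vzero;
  vscal_1 : forall x, vscal 1 x = x;
  vscal_assoc : forall a b x, vscal a (vscal b x) = vscal (a * b) x;
  vscal_distr_v : forall a x y, vscal a (vadd x y) = vadd (vscal a x) (vscal a y);
  vscal_distr_s : forall a b x, vscal (a + b) x = vadd (vscal a x) (vscal b x);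
  is_open : (carrier -> Prop) -> Prop;
  open_full : is_open (fun _ => True);
  open_inter : forall U W, is_open U -> is_open W -> is_open (fun x => U x /\ W x);
  open_union : forall (I : Type) (U : I -> carrier -> Prop),
      (forall i, is_open (U i)) -> is_open (fun x => exists i, U i x);
  vadd_cont : forall x y W, is_open W -> W (vadd x y) ->
      exists U1 U2, is_open U1 /\ is_open U2 /\ U1 x /\ U2 y /\
        (forall a b, U1 a -> U2 b -> W (vadd a b));
  vscal_cont : forall r x W, is_open W -> W (vscal r x) ->
      exists d U, d > 0 /\ is_open U /\ U x /\
        (forall s z, Rabs (s - r) < d -> U z -> W (vscal s z))
}.

Arguments vzero {_}.
Arguments vadd {_} _ _.
Arguments vscal {_} _ _.
Arguments is_open {_} _.

Section Defs.
Variable F : TVS.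

Fixpoint vsum (n : nat) (f : nat -> F) : F :=
  match n with
  | O => vzero
  | S m => vadd (vsum m f) (f m)
  end.

Fixpoint rsum (n : nat) (f : nat -> R) : R :=
  match n with
  | O => 0
  | S m => rsum m f + f m
  end.

Definition in_Delta (n : nat) (lam : nat -> R) : Prop :=
  (forall i, (i < n)%nat -> 0 <= lam i) /\ rsum n lam = 1.

Definition aff_indep (m : nat) (v : nat -> F) : Prop :=
  forall c : nat -> R, rsum m c = 0 ->
    vsum m (fun i => vscal (c i) (v i)) = vzero ->
    forall i, (i < m)%nat -> c i = 0.

Definition is_simplex (K : F -> Prop) : Prop :=
  exists (m : nat) (v : nat -> F), (1 <= m)%nat /\ aff_indep m v /\
    forall x, K x <-> exists lam, in_Delta m lam /\
                        x = vsum m (fun i => vscal (lam i) (v i)).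

Definition nbhd0 (V : F -> Prop) : Prop :=
  exists U, is_open U /\ U vzero /\ forall z, U z -> V z.

(* A correspondence T : X -> 2^Y is represented by T : F -> F -> Prop,
   T x y meaning y \in T(x).  Graph in X x Y: *)
Definition Gr (X : F -> Prop) (T : F -> F -> Prop) (p : F * F) : Prop :=
  X (fst p) /\ T (fst p) (snd p).

(* closure in X x Y (product of subspace topologies) of S *)
Definition clXY (X Y : F -> Prop) (S : F * F -> Prop) (p : F * F) : Prop :=
  X (fst p) /\ Y (snd p) /\
  forall U W, is_open U -> is_open W -> U (fst p) -> W (snd p) ->
    exists q, S q /\ X (fst q) /\ Y (snd q) /\ U (fst q) /\ W (snd q).

Definition Tbar (X Y : F -> Prop) (T : F -> F -> Prop) (x y : F) : Prop :=
  Y y /\ clXY X Y (Gr X T) (x, y).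

Definition T_V (Y : F -> Prop) (T : F -> F -> Prop) (V : F -> Prop) (x y : F) : Prop :=
  (exists t v, T x t /\ V v /\ y = vadd t v) /\ Y y.

Definition cont01 (g : R -> R) : Prop :=
  forall t, 0 <= t <= 1 -> forall eps, eps > 0 -> exists d, d > 0 /\
    forall s, 0 <= s <= 1 -> Rabs (s - t) < d -> Rabs (g s - g t) < eps.

Definition WNQ (X Y : F -> Prop) (T : F -> F -> Prop) : Prop :=
  forall (n : nat) (x : nat -> F),
    (forall i, (i < n)%nat -> X (x i)) ->
    (forall i j, (i < n)%nat -> (j < n)%nat -> x i = x j -> i = j) ->
    exists (y : nat -> F) (g : nat -> R -> R),
      (forall i, (i < n)%nat -> T (x i) (y i)) /\
      (forall i, (i < n)%nat ->
         cont01 (g i) /\ g i 0 = 0 /\ g i 1 = 1 /\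
         (forall t, 0 <= t <= 1 -> 0 <= g i t <= 1)) /\
      (* g = (g_1,...,g_n) is a bijection Delta_{n-1} -> Delta_{n-1} *)
      (forall lam, in_Delta n lam -> in_Delta n (fun i => g i (lam i))) /\
      (forall lam mu, in_Delta n lam -> in_Delta n mu ->
         (forall i, (i < n)%nat -> g i (lam i) = g i (mu i)) ->
         forall i, (i < n)%nat -> lam i = mu i) /\
      (forall mu, in_Delta n mu -> exists lam, in_Delta n lam /\
         forall i, (i < n)%nat -> g i (lam i) = mu i) /\
      (forall lam, in_Delta n lam ->
         T (vsum n (fun i => vscal (lam i) (x i)))
           (vsum n (fun i => vscal (g i (lam i)) (y i)))).

End Defs.

From Stdlib Require Import Reals Lra Lia List Classical ClassicalEpsilon.
From mathcomp Require all_boot all_order all_algebra all_classical all_reals all_analysis Rstruct Rstruct_topology.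
Open Scope R_scope.

(* Write K = conv{v_0,...,v_(m-1)} and describe its points by barycentric
   coordinates a in the standard simplex Delta_m; comb a = sum a_i v_i.
   1. Affine selections.  Weak natural quasiconvexity applied to the m
      vertices and the midpoint of [v_0, v_1] (m+1 >= 3 distinct points)
      forces every g_i to be the identity, because a coordinatewise self-map
      of a simplex with at least three vertices is additive on [0,1].  So
      T^V has an affine selection: a stochastic matrix mu with
      comb (a mu) in T^V (comb a) for all a in Delta_m.
   2. Approximate fixed points.  Cesaro averages of the iterates of a
      stochastic matrix give a in Delta_m with |a mu - a| < eps, hence every
      T^V has eps-approximate fixed points (comb a, comb (a mu)) in its graph.
   3. Compactness.  If no x lies in Tbar(x), every point of Delta_m has a
      coordinate neighbourhood and a neighbourhood V of 0 on which
      cl Gr(T_V) avoids (comb a, comb b); finitely many of them cover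
      Delta_m (compactness of the cube, from mathcomp-analysis), and an
      approximate fixed point of T^V for the intersection V of the chosen
      neighbourhoods contradicts this. *)

Definition cube (m : nat) (l : nat -> R) : Prop :=
  forall i, (i < m)%nat -> 0 <= l i <= 1.

Definition close_to (m : nat) (l : nat -> R) (d : R) (a : nat -> R) : Prop :=
  forall i, (i < m)%nat -> Rabs (a i - l i) < d.

Module CubeCompactness.
Import all_boot all_order all_algebra all_classical all_reals all_analysis Rstruct Rstruct_topology.
Import Num.Theory.
Local Open Scope classical_set_scope.
Local Open Scope ring_scope.

Definition fromRow {m : nat} (v : 'rV[R]_m) : nat -> R :=
  fun n => match @insub _ (fun k => k < m)%N _ n with Some i => v ord0 i | None => 0 end.

Lemma fromRowE {m} (v : 'rV[R]_m) (i : 'I_m) : fromRow v i = v ord0 i.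
Proof. by rewrite /fromRow valK. Qed.

Lemma In_mem (T : eqType) (x : T) (s : seq T) : List.In x s -> x \in s.
Proof. elim: s => //= a s IH [->|h]; rewrite in_cons ?eqxx //. by rewrite IH ?orbT. Qed.

Lemma mem_In (T : eqType) (x : T) (s : seq T) : x \in s -> List.In x s.
Proof. elim: s => //= a s IH; rewrite in_cons => /orP [/eqP ->|h]; [by left|by right; apply: IH]. Qed.

Lemma fromRow_cube m (v : 'rV[R]_m) : (forall i, `[0, 1]%classic (v ord0 i)) -> cube m (fromRow v).
Proof.
move=> H i /ssrnat.ltP im; have := H (Ordinal im).
rewrite -(fromRowE v (Ordinal im)) /= in_itv /= => /andP [h1 h2].
by split; apply/RleP.
Qed.

Lemma cube_cover (m : nat) (d : (nat -> R) -> R) : (forall l, cube m l -> Rlt 0 (d l)) ->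
  exists L : list (nat -> R), (forall l, List.In l L -> cube m l) /\
    forall a, cube m a -> exists l, List.In l L /\ close_to m l (d l) a.
Proof.
move=> dpos.
set C := [set v : 'rV[R]_m | forall i, `[0, 1]%classic (v ord0 i)].
have Cc : compact C.
  exact: (@rV_compact R m (fun=> `[0, 1]%classic) (fun=> @segment_compact R 0 1)).
rewrite compact_cover in Cc.
have [|D DC cov] := Cc _ C (fun v => ball v (d (fromRow v))) (fun v _ => ball_open _ _).
  move=> v Cv; exists v => //; apply: ballxx; apply/RltP; apply: dpos; exact: fromRow_cube.
exists (map (@fromRow m) (finmap.enum_fset D)); split.
  move=> l /in_map_iff [v [<- vD]]; apply: fromRow_cube.
  by have := DC v (In_mem _ _ _ vD); rewrite inE.
move=> a a01.
have aC : C (\row_(i < m) a i).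
  move=> i /=; rewrite mxE in_itv /=; have [h1 h2] := a01 i (ssrnat.ltP (ltn_ord i)).
  by apply/andP; split; apply/RleP.
have [v vD bv] := cov _ aC.
exists (fromRow v); split; first by apply/in_map_iff; exists v; split => //; exact: mem_In.
move=> i /ssrnat.ltP im; case: bv => _ /(_ ord0 (Ordinal im)).
rewrite /ball /= mxE -(fromRowE v (Ordinal im)) /= RabsE RminusE => h.
by apply/RltP; rewrite distrC.
Qed.
End CubeCompactness.

Section VectorAlgebra.
Variable F : TVS.

Lemma vadd_0l (x : F) : vadd vzero x = x.
Proof. rewrite vadd_comm. apply vadd_0. Qed.

Lemma vadd_cancel (a b c : F) : vadd a b = vadd a c -> b = c.
Proof.
  intro H.
  assert (E : forall z : F, vadd (vopp F a) (vadd a z) = z).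
  { intro z. rewrite vadd_assoc, (vadd_comm _ (vopp F a) a), vadd_opp. apply vadd_0l. }
  rewrite <- (E b), <- (E c), H. reflexivity.
Qed.

Lemma vscal_0 (x : F) : vscal 0 x = vzero.
Proof.
  apply (vadd_cancel (vscal 0 x)). rewrite vadd_0, <- vscal_distr_s. f_equal. ring.
Qed.

Lemma vscal_zero (a : R) : vscal a (@vzero F) = vzero.
Proof.
  apply (vadd_cancel (vscal a vzero)). rewrite vadd_0, <- vscal_distr_v, vadd_0. reflexivity.
Qed.

Lemma vadd_scal_m1 (x : F) : vadd x (vscal (-1) x) = vzero.
Proof.
  rewrite <- (vscal_1 F x) at 1. rewrite <- vscal_distr_s.
  replace (1 + -1) with 0 by ring. apply vscal_0.
Qed.

Lemma vadd_sub (t w : F) : vadd (vadd t w) (vscal (-1) w) = t.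
Proof. rewrite <- vadd_assoc, vadd_scal_m1. apply vadd_0. Qed.

Lemma vsum_ext n (f g : nat -> F) :
  (forall i, (i < n)%nat -> f i = g i) -> vsum F n f = vsum F n g.
Proof.
  induction n; intros H; simpl; [reflexivity|].
  rewrite IHn by (intros; apply H; lia). rewrite H by lia. reflexivity.
Qed.

Lemma vsum_zero n : vsum F n (fun _ => vzero) = vzero.
Proof. induction n; simpl; [reflexivity|]. rewrite IHn. apply vadd_0. Qed.

Lemma vsum_add n (f g : nat -> F) :
  vsum F n (fun i => vadd (f i) (g i)) = vadd (vsum F n f) (vsum F n g).
Proof.
  induction n; simpl; [rewrite vadd_0; reflexivity|].
  rewrite IHn, <- !vadd_assoc. f_equal. rewrite !vadd_assoc. f_equal. apply vadd_comm.
Qed.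

Lemma vsum_scal n a (f : nat -> F) :
  vscal a (vsum F n f) = vsum F n (fun i => vscal a (f i)).
Proof. induction n; simpl; [apply vscal_zero|]. rewrite vscal_distr_v, IHn. reflexivity. Qed.

Lemma vscal_rsum n c (x : F) : vscal (rsum n c) x = vsum F n (fun i => vscal (c i) x).
Proof. induction n; simpl; [apply vscal_0|]. rewrite vscal_distr_s, IHn. reflexivity. Qed.

Lemma vsum_swap n k (f : nat -> nat -> F) :
  vsum F n (fun i => vsum F k (f i)) = vsum F k (fun j => vsum F n (fun i => f i j)).
Proof.
  induction n; simpl; [symmetry; apply vsum_zero|].
  rewrite IHn. symmetry. apply vsum_add.
Qed.

Lemma vsum_single n (f : nat -> F) i :
  (i < n)%nat -> (forall l, (l < n)%nat -> l <> i -> f l = vzero) -> vsum F n f = f i.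
Proof.
  induction n; intros Hi H; [lia|]. simpl.
  destruct (Nat.eq_dec i n) as [->|ne].
  - rewrite (vsum_ext n f (fun _ => vzero)), vsum_zero by (intros; apply H; lia). apply vadd_0l.
  - rewrite IHn, (H n) by (try lia; intros; apply H; lia). apply vadd_0.
Qed.

End VectorAlgebra.

Lemma rsum_ext n (f g : nat -> R) :
  (forall i, (i < n)%nat -> f i = g i) -> rsum n f = rsum n g.
Proof.
  induction n; intros H; simpl; [reflexivity|].
  rewrite IHn by (intros; apply H; lia). rewrite H by lia. reflexivity.
Qed.

Lemma rsum_add n (f g : nat -> R) : rsum n (fun i => f i + g i) = rsum n f + rsum n g.
Proof. induction n; simpl; [ring|]. rewrite IHn. ring. Qed.

Lemma rsum_sub n (f g : nat -> R) : rsum n (fun i => f i - g i) = rsum n f - rsum n g.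
Proof. induction n; simpl; [ring|]. rewrite IHn. ring. Qed.

Lemma rsum_scal n a (f : nat -> R) : a * rsum n f = rsum n (fun i => a * f i).
Proof. induction n; simpl; [ring|]. rewrite <- IHn. ring. Qed.

Lemma rsum_const n c : rsum n (fun _ => c) = INR n * c.
Proof. induction n; simpl rsum; [simpl; ring|]. rewrite IHn, S_INR. ring. Qed.

Lemma rsum_swap n k (f : nat -> nat -> R) :
  rsum n (fun i => rsum k (f i)) = rsum k (fun j => rsum n (fun i => f i j)).
Proof.
  induction n; simpl.
  - rewrite rsum_const. ring.
  - rewrite IHn. symmetry. apply rsum_add.
Qed.

Lemma rsum_nonneg n (f : nat -> R) : (forall i, (i < n)%nat -> 0 <= f i) -> 0 <= rsum n f.
Proof.
  induction n; intros H; simpl; [lra|].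
  assert (0 <= rsum n f) by (apply IHn; intros; apply H; lia).
  assert (0 <= f n) by (apply H; lia). lra.
Qed.

Lemma rsum_ge_term n (f : nat -> R) i :
  (i < n)%nat -> (forall l, (l < n)%nat -> 0 <= f l) -> f i <= rsum n f.
Proof.
  induction n; intros Hi H; [lia|]. simpl.
  destruct (Nat.eq_dec i n) as [->|ne].
  - assert (0 <= rsum n f) by (apply rsum_nonneg; intros; apply H; lia). lra.
  - assert (f i <= rsum n f) by (apply IHn; try lia; intros; apply H; lia).
    assert (0 <= f n) by (apply H; lia). lra.
Qed.

Lemma rsum_single n (f : nat -> R) i :
  (i < n)%nat -> (forall l, (l < n)%nat -> l <> i -> f l = 0) -> rsum n f = f i.
Proof.
  induction n; intros Hi H; [lia|]. simpl.
  destruct (Nat.eq_dec i n) as [->|ne].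
  - rewrite (rsum_ext n f (fun _ => 0)), rsum_const by (intros; apply H; lia). ring.
  - rewrite IHn, (H n) by (try lia; intros; apply H; lia). ring.
Qed.

Lemma rsum_telescope n (f : nat -> R) : rsum n (fun k => f (S k)) - rsum n f = f n - f O.
Proof. induction n; simpl; lra. Qed.

Lemma rsum_diff_bound n (a b : nat -> R) d :
  (forall i, (i < n)%nat -> Rabs (a i - b i) <= d) -> Rabs (rsum n a - rsum n b) <= INR n * d.
Proof.
  intros H. rewrite <- rsum_sub, <- rsum_const.
  induction n; simpl rsum; [rewrite Rabs_R0; lra|].
  eapply Rle_trans; [apply Rabs_triang|].
  assert (Rabs (rsum n (fun i => a i - b i)) <= rsum n (fun _ => d)) by (apply IHn; intros; apply H; lia).
  assert (Rabs (a n - b n) <= d) by (apply H; lia). lra.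
Qed.

Lemma in_Delta_le1 m l i : in_Delta m l -> (i < m)%nat -> 0 <= l i <= 1.
Proof. intros [H1 H2] Hi. split; [auto|]. rewrite <- H2. apply rsum_ge_term; auto. Qed.

Lemma Delta_cube m l : in_Delta m l -> cube m l.
Proof. intros H i Hi. apply (in_Delta_le1 m); auto. Qed.

Definition ev (i : nat) : nat -> R := fun l => if Nat.eq_dec l i then 1 else 0.

Lemma rsum_ev n c i : (i < n)%nat -> rsum n (fun l => c * ev i l) = c.
Proof.
  intros Hi. rewrite (rsum_single n _ i Hi); unfold ev.
  - destruct (Nat.eq_dec i i); [ring|lia].
  - intros l _ ne. destruct (Nat.eq_dec l i); [lia|ring].
Qed.

Lemma ev_Delta m i : (i < m)%nat -> in_Delta m (ev i).
Proof.
  intros Hi. split.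
  - intros l _. unfold ev. destruct (Nat.eq_dec l i); lra.
  - rewrite <- (rsum_ev m 1 i Hi). apply rsum_ext. intros; ring.
Qed.

Definition comb (F : TVS) (m : nat) (v : nat -> F) (l : nat -> R) : F :=
  vsum F m (fun i => vscal (l i) (v i)).

Definition is_hull (F : TVS) (m : nat) (v : nat -> F) (K : F -> Prop) : Prop :=
  forall x, K x <-> exists lam, in_Delta m lam /\ x = comb F m v lam.

Lemma comb_ev (F : TVS) m (v : nat -> F) i : (i < m)%nat -> comb F m v (ev i) = v i.
Proof.
  intros Hi. unfold comb. rewrite (vsum_single F m _ i Hi); unfold ev.
  - destruct (Nat.eq_dec i i); [apply vscal_1|lia].
  - intros l _ ne. destruct (Nat.eq_dec l i); [lia|apply vscal_0].
Qed.

Lemma comb_comb (F : TVS) m (v : nat -> F) (l : nat -> R) (mu : nat -> nat -> R) :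
  vsum F m (fun i => vscal (l i) (comb F m v (mu i))) =
  comb F m v (fun j => rsum m (fun i => l i * mu i j)).
Proof.
  unfold comb.
  transitivity (vsum F m (fun i => vsum F m (fun j => vscal (l i * mu i j) (v j)))).
  { apply vsum_ext. intros i _. rewrite vsum_scal. apply vsum_ext. intros j _. apply vscal_assoc. }
  rewrite vsum_swap. apply vsum_ext. intros j _. symmetry. apply vscal_rsum.
Qed.

Lemma coords_unique (F : TVS) m (v : nat -> F) a b :
  aff_indep F m v -> rsum m a = rsum m b -> comb F m v a = comb F m v b ->
  forall i, (i < m)%nat -> a i = b i.
Proof.
  intros Hai Hs Hc i Hi.
  enough (a i - b i = 0) by lra.
  apply (Hai (fun i => a i - b i)); auto.
  - rewrite rsum_sub. lra.
  - rewrite (vsum_ext F m _ (fun i => vadd (vscal (a i) (v i)) (vscal (-1) (vscal (b i) (v i))))).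
    + rewrite vsum_add, <- vsum_scal. fold (comb F m v a) (comb F m v b). rewrite Hc. apply vadd_scal_m1.
    + intros j _. rewrite vscal_assoc, <- vscal_distr_s. f_equal. ring.
Qed.

Lemma comb_cont (F : TVS) m (v : nat -> F) (l : nat -> R) (W : F -> Prop) :
  is_open W -> W (comb F m v l) ->
  exists d, d > 0 /\ forall mu, close_to m l d mu -> W (comb F m v mu).
Proof.
  unfold comb. revert W. induction m; intros W Wo Wl.
  - exists 1. split; [lra|]. intros. exact Wl.
  - simpl in Wl.
    destruct (vadd_cont F _ _ W Wo Wl) as [U1 [U2 [U1o [U2o [HU1 [HU2 HU]]]]]].
    destruct (IHm U1 U1o HU1) as [d1 [d1p Hd1]].
    destruct (vscal_cont F _ _ U2 U2o HU2) as [d2 [U [d2p [Uo [Uv HUd]]]]].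
    exists (Rmin d1 d2). split; [apply Rmin_pos; lra|].
    intros mu Hmu. simpl. apply HU.
    + apply Hd1. intros i Hi. eapply Rlt_le_trans; [apply Hmu; lia|apply Rmin_l].
    + apply HUd; auto. eapply Rlt_le_trans; [apply Hmu; lia|apply Rmin_r].
Qed.

(* A nonnegative additive function h on [0,1] with h 1 = 1 is the identity
   (Cauchy's equation, using monotonicity instead of continuity). *)
Section AdditiveOnUnitInterval.
Variable h : R -> R.
Hypothesis h_one : h 1 = 1.
Hypothesis h_nonneg : forall t, 0 <= t <= 1 -> 0 <= h t.
Hypothesis h_add : forall s t, 0 <= s -> 0 <= t -> s + t <= 1 -> h (s + t) = h s + h t.

Lemma additive_zero : h 0 = 0.
Proof. assert (E := h_add 0 0). rewrite Rplus_0_r in E. lra. Qed.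

(* Nonnegativity and additivity give monotonicity. *)
Lemma additive_mono s t : 0 <= s <= t -> t <= 1 -> h s <= h t.
Proof.
  intros Hs Ht. replace t with (s + (t - s)) by ring. rewrite h_add by lra.
  assert (0 <= h (t - s)) by (apply h_nonneg; lra). lra.
Qed.

Lemma additive_nat_mult k s : 0 <= s -> INR k * s <= 1 -> h (INR k * s) = INR k * h s.
Proof.
  intros Hs. induction k as [|k IH]; intros Hk.
  - simpl. rewrite !Rmult_0_l. apply additive_zero.
  - rewrite S_INR in *. assert (0 <= INR k) by apply pos_INR.
    replace ((INR k + 1) * s) with (INR k * s + s) by ring.
    rewrite h_add, IH by nra. ring.
Qed.

Lemma additive_grid N k : (0 < N)%nat -> (k <= N)%nat -> h (INR k / INR N) = INR k / INR N.
Proof.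
  intros HN Hk. assert (HNr : 0 < INR N) by (apply lt_0_INR; lia).
  assert (HkN : INR k <= INR N) by (apply le_INR; lia).
  assert (Hinv : h (/ INR N) = / INR N).
  { assert (E := additive_nat_mult N (/ INR N)).
    rewrite Rinv_r in E by lra. rewrite h_one in E.
    assert (0 < / INR N) by (apply Rinv_0_lt_compat; lra).
    apply (Rmult_eq_reg_l (INR N)); [|lra]. rewrite <- E by lra. field. lra. }
  unfold Rdiv. rewrite additive_nat_mult, Hinv; [reflexivity| |].
  - left. apply Rinv_0_lt_compat; lra.
  - apply (Rmult_le_reg_r (INR N)); [lra|]. rewrite Rmult_assoc, Rinv_l; lra.
Qed.

Lemma nat_floor (N : nat) (t : R) : 0 <= t <= INR N ->
  exists k, (k <= N)%nat /\ INR k <= t <= INR k + 1.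
Proof.
  induction N; intros H.
  - exists O. simpl in *. split; [lia|lra].
  - rewrite S_INR in H. destruct (Rle_lt_dec t (INR N)) as [h'|h'].
    + destruct (IHN (conj (proj1 H) h')) as [k [Hk1 Hk2]]. exists k. split; [lia|exact Hk2].
    + exists N. split; [lia|lra].
Qed.

(* Squeezing t between consecutive grid points: |h t - t| <= 1/N. *)
Lemma additive_approx t N : 0 <= t <= 1 -> (0 < N)%nat -> Rabs (h t - t) <= / INR N.
Proof.
  intros Ht HN. assert (HNr : 0 < INR N) by (apply lt_0_INR; lia).
  destruct (nat_floor N (t * INR N)) as [k [Hk1 Hk2]]; [nra|].
  assert (to_frac : forall x y, x <= y * INR N -> x / INR N <= y).
  { intros x y Hxy. apply (Rmult_le_reg_r (INR N)); [lra|].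
    unfold Rdiv. rewrite Rmult_assoc, Rinv_l; lra. }
  assert (of_frac : forall x y, x * INR N <= y -> x <= y / INR N).
  { intros x y Hxy. apply (Rmult_le_reg_r (INR N)); [lra|].
    unfold Rdiv. rewrite Rmult_assoc, Rinv_l; lra. }
  assert (Lo : INR k / INR N <= h t).
  { rewrite <- (additive_grid N k) by auto. apply additive_mono; [|lra].
    split; [apply Rmult_le_pos; [apply pos_INR|left; apply Rinv_0_lt_compat; lra]|].
    apply to_frac; lra. }
  assert (Lo' : t - / INR N <= INR k / INR N).
  { apply of_frac. rewrite Rmult_minus_distr_r, Rinv_l; lra. }
  destruct (Nat.eq_dec k N) as [->|ne].
  - assert (t = 1). { enough (1 <= t) by lra. replace 1 with (INR N / INR N) by (field; lra). apply to_frac; lra. }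
    subst t. rewrite h_one, Rminus_diag, Rabs_R0. left. apply Rinv_0_lt_compat; lra.
  - assert (HSk : INR (S k) <= INR N) by (apply le_INR; lia). rewrite S_INR in HSk.
    assert (Up : h t <= (INR k + 1) / INR N).
    { rewrite <- S_INR, <- (additive_grid N (S k)) by lia. rewrite S_INR.
      apply additive_mono; [split; [lra|apply of_frac; lra]|apply to_frac; lra]. }
    assert (Up' : (INR k + 1) / INR N <= t + / INR N).
    { apply to_frac. rewrite Rmult_plus_distr_r, Rinv_l; lra. }
    apply Rabs_le. lra.
Qed.

Lemma additive_id t : 0 <= t <= 1 -> h t = t.
Proof.
  intros Ht. destruct (Req_dec (h t) t) as [e|ne]; [exact e|exfalso].
  assert (pos : 0 < Rabs (h t - t)) by (apply Rabs_pos_lt; lra).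
  destruct (archimed_cor1 _ pos) as [N [HN1 HN2]].
  assert (B := additive_approx t N Ht HN2). lra.
Qed.

End AdditiveOnUnitInterval.

Definition e3 (i j k : nat) (a b c : R) : nat -> R :=
  fun l => a * ev i l + b * ev j l + c * ev k l.

Lemma rsum_e3 n i j k a b c :
  (i < n)%nat -> (j < n)%nat -> (k < n)%nat -> rsum n (e3 i j k a b c) = a + b + c.
Proof. intros. unfold e3. rewrite !rsum_add, !rsum_ev; auto. Qed.

Lemma e3_Delta n i j k a b c :
  (i < n)%nat -> (j < n)%nat -> (k < n)%nat -> 0 <= a -> 0 <= b -> 0 <= c -> a + b + c = 1 ->
  in_Delta n (e3 i j k a b c).
Proof.
  intros. split; [|rewrite rsum_e3; auto].
  intros l _. unfold e3, ev.
  destruct (Nat.eq_dec l i), (Nat.eq_dec l j), (Nat.eq_dec l k); nra.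
Qed.

Section CoordinatewiseSelfMaps.
Variables (n : nat) (g : nat -> R -> R).
Hypothesis g_bounds : forall l, (l < n)%nat ->
  g l 0 = 0 /\ g l 1 = 1 /\ (forall t, 0 <= t <= 1 -> 0 <= g l t <= 1).
Hypothesis g_Delta : forall lam, in_Delta n lam -> in_Delta n (fun l => g l (lam l)).

Lemma g_sum3 i j k a b c :
  (i < n)%nat -> (j < n)%nat -> (k < n)%nat -> i <> j -> i <> k -> j <> k ->
  0 <= a -> 0 <= b -> 0 <= c -> a + b + c = 1 ->
  g i a + g j b + g k c = 1.
Proof.
  intros Hi Hj Hk ij ik jk Ha Hb Hc Habc.
  destruct (g_Delta _ (e3_Delta n i j k a b c Hi Hj Hk Ha Hb Hc Habc)) as [_ Hsum].
  rewrite <- Hsum, <- (rsum_e3 n i j k (g i a) (g j b) (g k c)) by auto.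
  apply rsum_ext. intros l Hl. unfold e3, ev.
  destruct (Nat.eq_dec l i), (Nat.eq_dec l j), (Nat.eq_dec l k); subst; try lia;
    rewrite ?Rmult_1_r, ?Rmult_0_r, ?Rplus_0_r, ?Rplus_0_l; try ring.
  symmetry. apply g_bounds; auto.
Qed.

(* With three distinct indices available, each g_i is additive, hence the identity. *)
Lemma g_identity_of_three i j k :
  (i < n)%nat -> (j < n)%nat -> (k < n)%nat -> i <> j -> i <> k -> j <> k ->
  forall t, 0 <= t <= 1 -> g i t = t.
Proof.
  intros Hi Hj Hk ij ik jk.
  assert (g0 : forall l, (l < n)%nat -> g l 0 = 0) by (intros; apply g_bounds; auto).
  apply additive_id; [apply g_bounds; auto|intros; apply g_bounds; auto|].
  intros s t Hs Ht Hst.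
  assert (E1 := g_sum3 i j k s t (1 - s - t) Hi Hj Hk ij ik jk Hs Ht ltac:(lra) ltac:(lra)).
  assert (E2 := g_sum3 i j k (s + t) 0 (1 - s - t) Hi Hj Hk ij ik jk ltac:(lra) ltac:(lra) ltac:(lra) ltac:(lra)).
  assert (E3 := g_sum3 i j k t 0 (1 - t) Hi Hj Hk ij ik jk ltac:(lra) ltac:(lra) ltac:(lra) ltac:(lra)).
  assert (E4 := g_sum3 i j k 0 t (1 - t) Hi Hj Hk ij ik jk ltac:(lra) ltac:(lra) ltac:(lra) ltac:(lra)).
  rewrite (g0 j) in E2, E3 by auto. rewrite (g0 i) in E4 by auto. lra.
Qed.

Lemma simplex_selfmap_identity : (3 <= n)%nat ->
  forall i, (i < n)%nat -> forall t, 0 <= t <= 1 -> g i t = t.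
Proof.
  intros Hn [|[|i]] Hi.
  - apply (g_identity_of_three 0 1 2); lia.
  - apply (g_identity_of_three 1 0 2); lia.
  - apply (g_identity_of_three (S (S i)) 0 1); lia.
Qed.

End CoordinatewiseSelfMaps.

(* Row-stochastic m x m matrices mu (row i is mu i) acting on row vectors. *)
Definition stochastic (m : nat) (mu : nat -> nat -> R) : Prop :=
  forall i, (i < m)%nat -> in_Delta m (mu i).

Definition markov (m : nat) (mu : nat -> nat -> R) (l : nat -> R) : nat -> R :=
  fun j => rsum m (fun i => l i * mu i j).

Lemma markov_Delta m mu l : stochastic m mu -> in_Delta m l -> in_Delta m (markov m mu l).
Proof.
  intros Hmu Hl. split.
  - intros j Hj. apply rsum_nonneg. intros i Hi. apply Rmult_le_pos; [apply Hl|apply (Hmu i)]; auto.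
  - unfold markov. rewrite rsum_swap. destruct Hl as [_ Hl]. rewrite <- Hl.
    apply rsum_ext. intros i Hi. rewrite <- rsum_scal. destruct (Hmu i Hi) as [_ ->]. ring.
Qed.

Fixpoint markov_iter (m : nat) (mu : nat -> nat -> R) (k : nat) : nat -> R :=
  match k with
  | O => ev 0
  | S k' => markov m mu (markov_iter m mu k')
  end.

Lemma markov_iter_Delta m mu k : (1 <= m)%nat -> stochastic m mu -> in_Delta m (markov_iter m mu k).
Proof.
  intros Hm Hmu. induction k; simpl; [apply ev_Delta; lia|]. apply markov_Delta; auto.
Qed.

(* Every stochastic matrix has approximately invariant distributions: the
   Cesaro average a of the first N iterates satisfies |a mu - a| <= 1/N. *)
Lemma markov_approx_fixed_point m mu : (1 <= m)%nat -> stochastic m mu ->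
  forall eps, eps > 0 -> exists a, in_Delta m a /\ close_to m a eps (markov m mu a).
Proof.
  intros Hm Hmu eps Heps.
  destruct (archimed_cor1 eps Heps) as [N [HN1 HN2]].
  assert (HNr : 0 < INR N) by (apply lt_0_INR; lia).
  set (it := markov_iter m mu).
  set (a := fun j => / INR N * rsum N (fun k => it k j)).
  assert (Hstep : forall j, markov m mu a j = / INR N * rsum N (fun k => it (S k) j)).
  { intros j. unfold markov at 1, a.
    transitivity (/ INR N * rsum m (fun i => rsum N (fun k => it k i * mu i j))).
    { rewrite rsum_scal. apply rsum_ext. intros i _. rewrite Rmult_assoc. f_equal.
      rewrite Rmult_comm, rsum_scal. apply rsum_ext. intros; ring. }
    rewrite rsum_swap. reflexivity. }
  exists a. split.
  - split.
    + intros j Hj. apply Rmult_le_pos; [left; apply Rinv_0_lt_compat; lra|].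
      apply rsum_nonneg. intros k _. apply (markov_iter_Delta m mu k Hm Hmu); auto.
    + unfold a. rewrite <- rsum_scal, <- rsum_swap.
      rewrite (rsum_ext N _ (fun _ => 1)) by (intros k _; apply (markov_iter_Delta m mu k Hm Hmu)).
      rewrite rsum_const. field. lra.
  - intros j Hj. rewrite Hstep. unfold a.
    rewrite <- Rmult_minus_distr_l, (rsum_telescope N (fun k => it k j)).
    assert (A1 := in_Delta_le1 m _ j (markov_iter_Delta m mu N Hm Hmu) Hj).
    assert (A2 := in_Delta_le1 m _ j (markov_iter_Delta m mu 0 Hm Hmu) Hj).
    rewrite Rabs_mult, Rabs_inv, (Rabs_right (INR N)) by lra.
    eapply Rle_lt_trans; [|apply HN1].
    rewrite <- (Rmult_1_r (/ INR N)) at 2. apply Rmult_le_compat_l.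
    + left; apply Rinv_0_lt_compat; lra.
    + apply Rabs_le. unfold it. lra.
Qed.

Lemma guarded_choice {A B : Type} (P : A -> Prop) (Q : A -> B -> Prop) :
  inhabited B -> (forall a, P a -> exists b, Q a b) ->
  exists f : A -> B, forall a, P a -> Q a (f a).
Proof.
  intros inhB H. exists (fun a => epsilon inhB (fun b => P a -> Q a b)).
  intros a Pa. apply (epsilon_spec inhB (fun b => P a -> Q a b)); [|exact Pa].
  destruct (H a Pa) as [b Hb]. exists b. intros _. exact Hb.
Qed.

Lemma hull_coords_family (F : TVS) m (v : nat -> F) (K : F -> Prop) (n : nat) (y : nat -> F) :
  is_hull F m v K -> (forall i, (i < n)%nat -> K (y i)) ->
  exists mu, forall i, (i < n)%nat -> in_Delta m (mu i) /\ y i = comb F m v (mu i).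
Proof.
  intros HK Hy.
  apply (guarded_choice (fun i => (i < n)%nat) (fun i mu => in_Delta m mu /\ y i = comb F m v mu));
    [exact (inhabits (fun _ => 0))|].
  intros i Hi. apply HK, Hy, Hi.
Qed.

(* The nodes used to test weak natural quasiconvexity: the m vertices of the
   simplex and, as node m, the midpoint of [e_0, e_1]. *)
Definition mid01 : nat -> R := fun l => / 2 * ev 0 l + / 2 * ev 1 l.

Definition wnq_node (m i : nat) : nat -> R := if Compare_dec.lt_dec i m then ev i else mid01.

Lemma wnq_node_Delta m i : (2 <= m)%nat -> in_Delta m (wnq_node m i).
Proof.
  intros Hm. unfold wnq_node. destruct (Compare_dec.lt_dec i m); [apply ev_Delta; auto|].
  split.
  - intros l _. unfold mid01, ev. destruct (Nat.eq_dec l 0), (Nat.eq_dec l 1); lra.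
  - unfold mid01. rewrite rsum_add, !rsum_ev by lia. lra.
Qed.

Lemma wnq_node_injective m i j : (i < S m)%nat -> (j < S m)%nat ->
  (forall l, (l < m)%nat -> wnq_node m i l = wnq_node m j l) -> i = j.
Proof.
  intros Hi Hj E. unfold wnq_node in E.
  destruct (Compare_dec.lt_dec i m) as [im|im], (Compare_dec.lt_dec j m) as [jm|jm]; try lia.
  - specialize (E i im). unfold ev in E.
    destruct (Nat.eq_dec i i), (Nat.eq_dec i j); try lia; lra.
  - specialize (E i im). unfold mid01, ev in E.
    destruct (Nat.eq_dec i i), (Nat.eq_dec i 0), (Nat.eq_dec i 1); try lia; lra.
  - specialize (E j jm). unfold mid01, ev in E.
    destruct (Nat.eq_dec j j), (Nat.eq_dec j 0), (Nat.eq_dec j 1); try lia; lra.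
Qed.

Definition ext0 (m : nat) (a : nat -> R) : nat -> R :=
  fun i => if Compare_dec.lt_dec i m then a i else 0.

Lemma ext0_Delta m a : in_Delta m a -> in_Delta (S m) (ext0 m a).
Proof.
  intros [Ha Hs]. unfold ext0. split.
  - intros i Hi. destruct (Compare_dec.lt_dec i m); [auto|lra].
  - simpl. destruct (Compare_dec.lt_dec m m); [lia|]. rewrite <- Hs, Rplus_0_r.
    apply rsum_ext. intros i Hi. destruct (Compare_dec.lt_dec i m); [reflexivity|lia].
Qed.

Section AffineSelection.
Variables (F : TVS) (m : nat) (v : nat -> F) (K : F -> Prop) (TV : F -> F -> Prop).
Hypothesis Hai : aff_indep F m v.
Hypothesis HK : is_hull F m v K.
Hypothesis HTV : forall x y, K x -> TV x y -> K y.
Hypothesis Hw : WNQ F K K TV.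

Definition affine_selection (mu : nat -> nat -> R) : Prop :=
  stochastic m mu /\ forall a, in_Delta m a -> TV (comb F m v a) (comb F m v (markov m mu a)).

(* A single point: any y_0 in TV(v_0) gives a constant, hence affine, selection. *)
Lemma affine_selection_point : m = 1%nat -> exists mu, affine_selection mu.
Proof.
  unfold affine_selection. intros ->.
  assert (Kv0 : K (v O)).
  { apply HK. exists (ev 0). split; [apply ev_Delta; lia|]. symmetry. apply comb_ev. lia. }
  destruct (Hw 1%nat (fun _ => v O)) as [y [_ [Hy _]]]; [auto|intros; lia|].
  assert (Ty := Hy O ltac:(lia)).
  assert (Ky := HTV _ _ Kv0 Ty). apply HK in Ky. destruct Ky as [mu0 [Hmu0 Ey]].
  exists (fun _ => mu0). split; [intros i _; exact Hmu0|].
  intros a [_ Ha]. rewrite Ey in Ty.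
  unfold comb, markov in *; simpl in *. rewrite Rplus_0_l in Ha.
  rewrite Ha, vscal_1, vadd_0l. replace (0 + 1 * mu0 O) with (mu0 O) by ring. exact Ty.
Qed.

(* At least two vertices: the m + 1 nodes are distinct, so the bijection g of
   the definition of WNQ acts on a simplex with >= 3 vertices and is the
   identity; the quasiconvexity inclusion is then the affine selection. *)
Lemma affine_selection_simplex : (2 <= m)%nat -> exists mu, affine_selection mu.
Proof.
  intros Hm.
  set (x := fun i => comb F m v (wnq_node m i)).
  assert (Kx : forall i, K (x i)).
  { intros i. apply HK. exists (wnq_node m i). split; [apply wnq_node_Delta; auto|reflexivity]. }
  destruct (Hw (S m) x) as [y [g [Hy [Hg [gD [_ [_ Hsel]]]]]]]; [auto| |].
  - intros i j Hi Hj Exy. apply (wnq_node_injective m); auto.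
    apply (coords_unique F m v); auto.
    destruct (wnq_node_Delta m i Hm) as [_ ->]. destruct (wnq_node_Delta m j Hm) as [_ ->]. reflexivity.
  - assert (g_id := simplex_selfmap_identity (S m) g (fun l Hl => proj2 (Hg l Hl)) gD ltac:(lia)).
    destruct (hull_coords_family F m v K m y HK) as [mu Hmu].
    { intros i Hi. apply (HTV (x i)); [apply Kx|apply Hy; lia]. }
    exists mu. split; [intros i Hi; apply Hmu; auto|].
    intros a Ha. specialize (Hsel (ext0 m a) (ext0_Delta m a Ha)). cbn [vsum] in Hsel.
    replace (ext0 m a m) with 0 in Hsel by (unfold ext0; destruct (Compare_dec.lt_dec m m); [lia|reflexivity]).
    destruct (Hg m ltac:(lia)) as [_ [g0 _]]. rewrite g0, !vscal_0, !vadd_0 in Hsel.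
    rewrite (vsum_ext F m (fun i => vscal (ext0 m a i) (x i)) (fun i => vscal (a i) (v i))) in Hsel.
    + rewrite (vsum_ext F m (fun i => vscal (g i (ext0 m a i)) (y i))
                       (fun i => vscal (a i) (comb F m v (mu i)))) in Hsel.
      * unfold markov. rewrite <- comb_comb. exact Hsel.
      * intros i Hi. unfold ext0. destruct (Compare_dec.lt_dec i m); [|lia].
        rewrite g_id by (try lia; apply (in_Delta_le1 m); auto). f_equal. apply Hmu; auto.
    + intros i Hi. unfold ext0, x, wnq_node. destruct (Compare_dec.lt_dec i m); [|lia].
      rewrite comb_ev; auto.
Qed.

End AffineSelection.

Lemma wnq_approx_fixed_point (F : TVS) m (v : nat -> F) (K : F -> Prop) (TV : F -> F -> Prop) :
  (1 <= m)%nat -> aff_indep F m v -> is_hull F m v K ->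
  (forall x y, K x -> TV x y -> K y) -> WNQ F K K TV ->
  forall eps, eps > 0 -> exists a b, in_Delta m a /\ close_to m a eps b /\
    TV (comb F m v a) (comb F m v b).
Proof.
  intros Hm Hai HK HTV Hw eps Heps.
  assert (Hsel : exists mu, affine_selection F m v TV mu).
  { destruct (Nat.eq_dec m 1) as [m1|m1].
    - apply (affine_selection_point F m v K TV); auto.
    - apply (affine_selection_simplex F m v K TV); auto; lia. }
  destruct Hsel as [mu [Hmu Tmu]].
  destruct (markov_approx_fixed_point m mu Hm Hmu eps Heps) as [a [Ha Hclose]].
  exists a, (markov m mu a). auto.
Qed.

Lemma not_Tbar_separation (F : TVS) (K : F -> Prop) (T : F -> F -> Prop) z :
  (forall x y, K x -> T x y -> K y) -> K z -> ~ Tbar F K K T z z ->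
  exists U W, is_open U /\ is_open W /\ U z /\ W z /\
    forall a b, K a -> T a b -> U a -> W b -> False.
Proof.
  intros HT Kz Hno. apply NNPP. intro Hsep. apply Hno.
  split; [exact Kz|]. split; [exact Kz|]. split; [exact Kz|].
  intros U W Uo Wo Uz Wz. apply NNPP. intro Hmiss. apply Hsep.
  exists U, W. repeat split; auto.
  intros a b Ka Tab Ua Wb. apply Hmiss. exists (a, b). simpl. repeat split; eauto.
Qed.

(* An open set W around z contains t whenever t + w lies in a smaller open set
   A around z and w is in a neighbourhood V of 0 (continuity of t+w and -w). *)
Lemma open_absorbs_perturbation (F : TVS) (W : F -> Prop) (z : F) :
  is_open W -> W z -> exists A V, is_open A /\ A z /\ nbhd0 F V /\
    forall t w, V w -> A (vadd t w) -> W t.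
Proof.
  intros Wo Wz. rewrite <- (vadd_0 F z) in Wz.
  destruct (vadd_cont F _ _ W Wo Wz) as [A [B [Ao [Bo [Az [B0 HAB]]]]]].
  rewrite <- (vscal_zero F (-1)) in B0.
  destruct (vscal_cont F _ _ B Bo B0) as [d [V [dpos [Vo [V0 HV]]]]].
  exists A, V. split; [exact Ao|]. split; [exact Az|]. split; [exists V; auto|].
  intros t w Vw Atw. rewrite <- (vadd_sub F t w). apply HAB; [exact Atw|].
  apply HV; [|exact Vw]. rewrite Rminus_diag, Rabs_R0. exact dpos.
Qed.

Lemma nonfixed_point_isolated (F : TVS) m (v : nat -> F) (K : F -> Prop) (T : F -> F -> Prop) l :
  is_hull F m v K -> (forall x y, K x -> T x y -> K y) -> in_Delta m l ->
  ~ Tbar F K K T (comb F m v l) (comb F m v l) ->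
  exists d V, 0 < d /\ nbhd0 F V /\ forall a b, close_to m l d a -> close_to m l d b ->
    ~ clXY F K K (Gr F K (T_V F K T V)) (comb F m v a, comb F m v b).
Proof.
  intros HK HT Hl Hno.
  assert (Kz : K (comb F m v l)) by (apply HK; exists l; auto).
  destruct (not_Tbar_separation F K T _ HT Kz Hno) as [U [W [Uo [Wo [Uz [Wz Hsep]]]]]].
  destruct (open_absorbs_perturbation F W _ Wo Wz) as [A [V [Ao [Az [HV HA]]]]].
  destruct (comb_cont F m v l (fun x => U x /\ A x) (open_inter F U A Uo Ao) (conj Uz Az))
    as [d [dpos Hd]].
  exists d, V. split; [exact dpos|]. split; [exact HV|].
  intros a b Ha Hb [_ [_ Hcl]].
  destruct (Hd a Ha) as [Ua _]. destruct (Hd b Hb) as [_ Ab].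
  destruct (Hcl U A Uo Ao Ua Ab) as [[a' b'] [[Ka' [[t [w [Tt [Vw ->]]]] _]] [_ [_ [Ua' Ab']]]]].
  exact (Hsep a' t Ka' Tt Ua' (HA t w Vw Ab')).
Qed.

Lemma clXY_Gr_T_V_mono (F : TVS) (K : F -> Prop) (T : F -> F -> Prop) (V1 V2 : F -> Prop) p :
  (forall z, V1 z -> V2 z) -> clXY F K K (Gr F K (T_V F K T V1)) p -> clXY F K K (Gr F K (T_V F K T V2)) p.
Proof.
  intros H12 [Kp1 [Kp2 Hcl]]. split; [exact Kp1|]. split; [exact Kp2|].
  intros U W Uo Wo Up Wp.
  destruct (Hcl U W Uo Wo Up Wp) as [q [[Kq [[t [w [Tt [Vw Eq]]]] Kq2]] Hq]].
  exists q. split; [|exact Hq]. split; [exact Kq|]. split; [exists t, w; auto|exact Kq2].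
Qed.

(* Derived from the cube by giving off-simplex centres a radius so small that
   their boxes miss the simplex (the coordinate sum moves by at most m d). *)
Lemma simplex_cover m (d : (nat -> R) -> R) :
  (forall l, in_Delta m l -> 0 < d l) ->
  exists L : list (nat -> R), (forall l, In l L -> in_Delta m l) /\
    forall a, in_Delta m a -> exists l, In l L /\ close_to m l (d l) a.
Proof.
  intros dpos.
  set (inD := fun l => if excluded_middle_informative (in_Delta m l) then true else false).
  assert (inD_spec : forall l, inD l = true <-> in_Delta m l).
  { intros l. unfold inD. destruct excluded_middle_informative; split; auto; discriminate. }
  assert (Hm1 : 0 < INR m + 1) by (pose proof (pos_INR m); lra).
  set (gap := fun l => Rabs (rsum m l - 1) / (INR m + 1)).
  assert (gap_pos : forall l, cube m l -> inD l = false -> 0 < gap l).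
  { intros l Hl E. apply Rdiv_lt_0_compat; [|exact Hm1]. apply Rabs_pos_lt. intro Hs.
    assert (Hin : in_Delta m l) by (split; [intros i Hi; apply Hl, Hi|lra]).
    apply inD_spec in Hin. congruence. }
  set (d' := fun l => if inD l then d l else gap l).
  destruct (CubeCompactness.cube_cover m d') as [L0 [HL0c HL0]].
  - intros l Hl. unfold d'. destruct (inD l) eqn:E; [apply dpos, inD_spec, E|auto].
  - exists (filter inD L0). split.
    + intros l Hl. apply filter_In in Hl. apply inD_spec, Hl.
    + intros a Ha. destruct (HL0 a (Delta_cube m a Ha)) as [l [Hl Hal]].
      exists l. unfold d' in Hal. destruct (inD l) eqn:E.
      * split; [apply filter_In; auto|exact Hal].
      * exfalso. assert (Hg := gap_pos l (HL0c l Hl) E).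
        assert (B := rsum_diff_bound m a l (gap l) (fun i Hi => Rlt_le _ _ (Hal i Hi))).
        destruct Ha as [_ Ha]. rewrite Ha, Rabs_minus_sym in B.
        assert (Egap : Rabs (rsum m l - 1) = gap l * (INR m + 1)) by (unfold gap; field; lra).
        lra.
Qed.

Lemma close_to_weaken m l d1 d2 a : d1 <= d2 -> close_to m l d1 a -> close_to m l d2 a.
Proof. intros Hd H i Hi. specialize (H i Hi). lra. Qed.

Lemma close_to_trans m l a b d1 d2 :
  close_to m l d1 a -> close_to m a d2 b -> close_to m l (d1 + d2) b.
Proof.
  intros Ha Hb i Hi. replace (b i - l i) with ((b i - a i) + (a i - l i)) by ring.
  eapply Rle_lt_trans; [apply Rabs_triang|]. specialize (Ha i Hi). specialize (Hb i Hi). lra.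
Qed.

Lemma list_min (L : list (nat -> R)) (d : (nat -> R) -> R) :
  (forall l, In l L -> 0 < d l) -> exists e, 0 < e /\ forall l, In l L -> e <= d l.
Proof.
  induction L as [|l0 L IH]; intros H.
  - exists 1. split; [lra|]. intros l [].
  - destruct IH as [e [He Hl]]; [intros; apply H; right; auto|].
    assert (0 < d l0) by (apply H; left; auto).
    exists (Rmin e (d l0)). split; [apply Rmin_pos; auto|].
    intros l [<-|Hin]; [apply Rmin_r|]. eapply Rle_trans; [apply Rmin_l|auto].
Qed.

Lemma list_nbhd (F : TVS) (L : list (nat -> R)) (VF : (nat -> R) -> F -> Prop) :
  (forall l, In l L -> nbhd0 F (VF l)) -> nbhd0 F (fun z => forall l, In l L -> VF l z).
Proof.
  induction L as [|l0 L IH]; intros H.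
  - exists (fun _ => True). split; [apply open_full|]. split; [auto|]. intros z _ l [].
  - destruct IH as [U [Uo [U0 HU]]]; [intros; apply H; right; auto|].
    destruct (H l0 (or_introl eq_refl)) as [U1 [U1o [U10 HU1]]].
    exists (fun z => U z /\ U1 z). split; [apply open_inter; auto|]. split; [auto|].
    intros z [Uz U1z] l [<-|Hin]; auto.
Qed.

Theorem theorem5 (F : TVS) (K : F -> Prop) (T : F -> F -> Prop) :
  is_simplex F K ->
  (forall x y, K x -> T x y -> K y) ->
  (forall V : F -> Prop, nbhd0 F V ->
     exists TV : F -> F -> Prop,
       (forall x y, K x -> TV x y -> K y) /\
       WNQ F K K TV /\
       (forall p, Gr F K TV p -> clXY F K K (Gr F K (T_V F K T V)) p)) ->
  exists xs, K xs /\ Tbar F K K T xs xs.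
Proof.
  intros [m [v [Hm [Hai HK]]]] HT HV.
  apply NNPP. intro Hno.
  assert (Hiso : forall l, in_Delta m l -> exists p : R * (F -> Prop),
    0 < fst p /\ nbhd0 F (snd p) /\ forall a b, close_to m l (fst p) a -> close_to m l (fst p) b ->
      ~ clXY F K K (Gr F K (T_V F K T (snd p))) (comb F m v a, comb F m v b)).
  { intros l Hl. destruct (nonfixed_point_isolated F m v K T l HK HT Hl) as [d [V Hd]].
    - intro Hfix. apply Hno. exists (comb F m v l). split; [apply HK; exists l; auto|exact Hfix].
    - exists (d, V). exact Hd. }
  destruct (guarded_choice _ _ (inhabits (1, fun _ => True)) Hiso) as [P HP].
  destruct (simplex_cover m (fun l => fst (P l) / 2)) as [L [HLD HLcov]].
  { intros l Hl. destruct (HP l Hl) as [Hd _]. lra. }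
  destruct (list_min L (fun l => fst (P l) / 2)) as [e [epos He]].
  { intros l Hl. destruct (HP l (HLD l Hl)) as [Hd _]. lra. }
  destruct (HV (fun z => forall l, In l L -> snd (P l) z)) as [TV [HTV [Hw Hgr]]].
  { apply list_nbhd. intros l Hl. apply HP, HLD, Hl. }
  destruct (wnq_approx_fixed_point F m v K TV Hm Hai HK HTV Hw e epos) as [a [b [Ha [Hab Tab]]]].
  destruct (HLcov a Ha) as [l [Hl Hla]].
  destruct (HP l (HLD l Hl)) as [dpos [_ Hfar]].
  assert (Hel := He l Hl); simpl in Hel.
  apply (Hfar a b).
  - apply (close_to_weaken m l (fst (P l) / 2)); [lra|exact Hla].
  - apply (close_to_weaken m l (fst (P l) / 2 + e)); [lra|].
    apply (close_to_trans m l a b); assumption.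
  - apply (clXY_Gr_T_V_mono F K T (fun z => forall l, In l L -> snd (P l) z)); [auto|].
    apply Hgr. split; [apply HK; exists a; auto|exact Tab].
Qed.
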